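(* Let $\mathbb{X}$ be a finite set, $\mathcal{H}_A$ a finite-dimensional Hilbert space, and $\{\rho_A^x\}_{x\in\mathbb{X}}$ density operators on $\mathcal{H}_A$. Define the barycentric quantum Rényi leakage \[ \mathcal{B}(X\rightarrow A)_{\rho_A}=\min_{\pi\in\Delta(\mathbb{X})}\max_{x\in\mathbb{X}}\widetilde{D}_\infty\Big(\rho_A^x\,\Big\|\,\sum_{x'\in\mathbb{X}}\pi(x')\rho_A^{x'}\Big). \] Then: (a) $\mathcal{B}(X\rightarrow A)_{\rho_A}\geq 0$, with equality if and only if $\rho_A^x=\rho_A^{x'}$ for all $x,x'\in\mathbb{X}$; (b) for any unitary $U$ on $\mathcal{H}_A$, the barycentric quantum Rényi leakage of the family $\{U\rho_A^xU^\dagger\}_{x\in\mathbb{X}}$ equals that of $\{\rho_A^x\}_{x\in\mathbb{X}}$; (c) for any quantum channel $\mathcal{E}$ (completely positive trace-preserving map) with domain the operators on $\mathcal{H}_A$, the barycentric quantum Rényi leakage of the family $\{\mathcal{E}(\rho_A^x)\}_{x\in\mathbb{X}}$ is at most that of $\{\rho_A^x\}_{x\in\mathbb{X}}$.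
   Context: All logarithms are base 2. $\Delta(\mathbb{X})$ is the set of probability mass functions on $\mathbb{X}$. For a density operator $\rho$ and positive semi-definite $\sigma$, $\widetilde{D}_\infty(\rho\|\sigma)=\log\big(\inf\{\mu\in\mathbb{R}:\rho\leq\mu\sigma\}\big)$, equal to $+\infty$ if the support of $\rho$ is not contained in that of $\sigma$. *)

From HB Require Import structures.
From mathcomp Require Import all_boot all_order all_algebra.
From mathcomp Require Import spectral.
From mathcomp Require Import complex mxtens.
From mathcomp Require Import classical_sets boolp reals constructive_ereal ereal exp.

Set Implicit Arguments.
Unset Strict Implicit.
Unset Printing Implicit Defensive.

Import Order.TTheory GRing.Theory Num.Theory.
Local Open Scope ring_scope.
Local Open Scope classical_set_scope.
Local Open Scope sesquilinear_scope.

(* Hilbert space H_A = C^n, C = R[i] with R : realType; operators are 'M[R[i]]_n. *)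

Definition psdmx (R : realType) (n : nat) (A : 'M[R[i]]_n) : Prop :=
  A ^t* = A /\ forall v : 'cV[R[i]]_n, 0 <= (v ^t* *m A *m v) 0 0.

Definition loewner_le (R : realType) (n : nat) (A B : 'M[R[i]]_n) : Prop :=
  psdmx (B - A).

Definition density (R : realType) (n : nat) (rho : 'M[R[i]]_n) : Prop :=
  psdmx rho /\ \tr rho = 1.

Definition log2 (R : realType) (x : R) : R := ln x / ln 2.

(* max-relative entropy  D~_oo(rho || sigma) = log (inf {mu : rho <= mu sigma}),
   +oo when no such mu exists (support of rho not contained in that of sigma) *)
Definition Dmax (R : realType) (n : nat) (rho sigma : 'M[R[i]]_n) : \bar R :=
  let S := [set mu : R | loewner_le rho ((mu%:C)%C *: sigma)] in
  if `[< S !=set0 >] then (log2 (inf S))%:E else +oo%E.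

Definition pmf (R : realType) (X : finType) (pi : X -> R) : Prop :=
  (forall x, 0 <= pi x) /\ \sum_(x : X) pi x = 1.

Definition leakage (R : realType) (X : finType) (n : nat) (rho : X -> 'M[R[i]]_n)
  : \bar R :=
  ereal_inf [set (\big[Order.max/-oo%E]_(x : X)
                    Dmax (rho x) (\sum_(x' : X) ((pi x')%:C)%C *: rho x'))%E
            | pi in [set pi : X -> R | pmf pi]].

(* k x k block (i,j) (each n x n) of an operator on C^k (x) C^n *)
Definition block (R : realType) (k n : nat) (M : 'M[R[i]]_(k * n)) (i j : 'I_k)
  : 'M[R[i]]_n :=
  \matrix_(a, b) M (mxtens_index (i, a)) (mxtens_index (j, b)).

(* (id_k (x) E) applied to M *)
Definition ampliation (R : realType) (k n m : nat)
  (E : 'M[R[i]]_n -> 'M[R[i]]_m) (M : 'M[R[i]]_(k * n)) : 'M[R[i]]_(k * m) :=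
  \sum_(i < k) \sum_(j < k) tensmx (delta_mx i j : 'M[R[i]]_k) (E (block M i j)).

Definition completely_positive (R : realType) (n m : nat)
  (E : 'M[R[i]]_n -> 'M[R[i]]_m) : Prop :=
  forall (k : nat) (M : 'M[R[i]]_(k * n)), psdmx M -> psdmx (ampliation E M).

Definition trace_preserving (R : realType) (n m : nat)
  (E : 'M[R[i]]_n -> 'M[R[i]]_m) : Prop :=
  forall A : 'M[R[i]]_n, \tr (E A) = \tr A.

Definition quantum_channel (R : realType) (n m : nat)
  (E : {linear 'M[R[i]]_n -> 'M[R[i]]_m}) : Prop :=
  completely_positive E /\ trace_preserving E.

(* A Loewner inequality rho <= mu sigma between unit-trace operators forces
   mu >= 1 (take traces), so every D~_oo(rho^x || sigma) is nonnegative.  If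
   the leakage vanishes, then for every e > 0 some mixture sigma satisfies
   rho^x <= mu_x sigma with mu_x < 1 + e for all x.  The quadratic forms of
   rho^x and sigma then differ by O(e) on the vectors e_a + c e_b, |c| <= 1,
   which determine an operator by polarization, so all the rho^x coincide.
   Unitary conjugation preserves the Loewner order in both directions, a
   completely positive trace-preserving map preserves it and the traces, and
   both commute with mixing; this gives invariance and data processing. *)

From HB Require Import structures.
From mathcomp Require Import all_boot all_order all_algebra.
From mathcomp Require Import spectral.
From mathcomp Require Import complex mxtens.
From mathcomp Require Import classical_sets boolp reals constructive_ereal ereal exp.
From mathcomp Require Import ring lra.

Set Implicit Arguments.
Unset Strict Implicit.
Unset Printing Implicit Defensive.

Import Order.TTheory GRing.Theory Num.Theory.
Local Open Scope ring_scope.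
Local Open Scope sesquilinear_scope.
Local Open Scope classical_set_scope.

Section Forms.
Variable R : realType.
Local Notation C := R[i].

Definition sform n (A : 'M[C]_n) (u w : 'cV[C]_n) : C := (u ^t* *m A *m w) 0 0.
Definition qform n (A : 'M[C]_n) (v : 'cV[C]_n) : C := sform A v v.

Definition probe n (a b : 'I_n) (c : C) : 'cV[C]_n := delta_mx a 0 + c *: delta_mx b 0.

Section Sesquilinearity.
Variables (n : nat) (A : 'M[C]_n).

Lemma sformDl u u' w : sform A (u + u') w = sform A u w + sform A u' w.
Proof. by rewrite /sform linearD map_mxD !mulmxDl mxE. Qed.

Lemma sformDr u w w' : sform A u (w + w') = sform A u w + sform A u w'.
Proof. by rewrite /sform !mulmxDr mxE. Qed.

Lemma sformZl c u w : sform A (c *: u) w = c^* * sform A u w.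
Proof. by rewrite /sform linearZ map_mxZ -!scalemxAl mxE. Qed.

Lemma sformZr c u w : sform A u (c *: w) = c * sform A u w.
Proof. by rewrite /sform -!scalemxAr mxE. Qed.

Lemma sform_delta a b : sform A (delta_mx a 0) (delta_mx b 0) = A a b.
Proof. by rewrite /sform trmx_delta map_delta_mx -colE -rowE !mxE. Qed.

End Sesquilinearity.

Lemma qformB n (A B : 'M[C]_n) v : qform (A - B) v = qform A v - qform B v.
Proof. by rewrite /qform /sform mulmxBr mulmxBl !mxE. Qed.

Lemma qformZ n (c : C) (A : 'M[C]_n) v : qform (c *: A) v = c * qform A v.
Proof. by rewrite /qform /sform -scalemxAr -scalemxAl mxE. Qed.

Lemma qform_probe n (A : 'M[C]_n) a b c :
  qform A (probe a b c) = A a a + c * A a b + c^* * A b a + c^* * c * A b b.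
Proof.
by rewrite /qform /probe sformDl !sformDr !sformZl !sformZr !sform_delta mulrA !addrA.
Qed.

Lemma psdmx0 n : psdmx (0 : 'M[C]_n).
Proof.
split; first by rewrite linear0 map_mx0.
by move=> v; rewrite mulmx0 mul0mx mxE.
Qed.

Lemma qform_ge0 n (A : 'M[C]_n) v : psdmx A -> 0 <= qform A v.
Proof. by case=> _ /(_ v). Qed.

Lemma psdmx_diag_ge0 n (A : 'M[C]_n) a : psdmx A -> 0 <= A a a.
Proof. by move=> /(qform_ge0 (delta_mx a 0)); rewrite /qform sform_delta. Qed.

Lemma psdmx_tr_ge0 n (A : 'M[C]_n) : psdmx A -> 0 <= \tr A.
Proof. by move=> psdA; apply: sumr_ge0 => a _; apply: psdmx_diag_ge0. Qed.

Lemma psdmx_diag_le_tr n (A : 'M[C]_n) a : psdmx A -> A a a <= \tr A.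
Proof.
move=> psdA; rewrite /mxtrace (bigD1 a) //= lerDl.
by apply: sumr_ge0 => b _; apply: psdmx_diag_ge0.
Qed.

(* Adding the forms at [c] and [-c] cancels the off-diagonal terms. *)
Lemma qform_probe_le_tr n (A : 'M[C]_n) a b c : psdmx A -> `|c| <= 1 ->
  qform A (probe a b c) <= 4%:R * \tr A.
Proof.
move=> psdA c_le1.
have sum_pm : qform A (probe a b c) + qform A (probe a b (- c)) =
    2%:R * A a a + 2%:R * (c * c^* * A b b).
  by rewrite !qform_probe rmorphN /=; ring.
have ccJ_le1 : c * c^* <= 1 by rewrite -normCK exprn_ile1.
have Abb_le : c * c^* * A b b <= \tr A.
  apply: le_trans (psdmx_diag_le_tr b psdA).
  by rewrite ler_piMl ?psdmx_diag_ge0 // mul_conjC_ge0.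
apply: le_trans (_ : _ <= qform A (probe a b c) + qform A (probe a b (- c))) _.
  by rewrite lerDl qform_ge0.
have -> : 4%:R * \tr A = 2%:R * \tr A + 2%:R * \tr A by rewrite -mulrDl -natrD.
by rewrite sum_pm lerD // ler_pM2l ?ltr0n // psdmx_diag_le_tr.
Qed.

(* Polarization: the probes with [c = 0, 1, 'i] recover every entry. *)
Lemma qform_probe_eq0 n (D : 'M[C]_n) :
  (forall a b c, `|c| <= 1 -> qform D (probe a b c) = 0) -> D = 0.
Proof.
move=> D0; apply/matrixP => a b; rewrite mxE.
have diag0 a' : D a' a' = 0.
  by have := D0 a' a' 0; rewrite normr0 ler01 qform_probe !(mul0r, rmorph0, addr0) => ->.
have := D0 a b 1; rewrite normr1 lexx qform_probe rmorph1 !mul1r !diag0 add0r addr0.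
move=> /(_ isT)/eqP; rewrite addr_eq0 => /eqP Dba.
have := D0 a b 'i; rewrite normCi lexx qform_probe conjCi !diag0 add0r !mulr0 addr0 Dba.
move=> /(_ isT)/eqP; rewrite mulrN mulNr -opprD oppr_eq0 -mulr2n mulrn_eq0 /=.
by rewrite mulf_eq0 (negbTE (neq0Ci _)) => /eqP ->; rewrite oppr0.
Qed.

Lemma psdmxD n (A B : 'M[C]_n) : psdmx A -> psdmx B -> psdmx (A + B).
Proof.
move=> [hermA formA] [hermB formB]; split; first by rewrite linearD map_mxD hermA hermB.
by move=> v; rewrite mulmxDr mulmxDl mxE addr_ge0.
Qed.

Lemma psdmxZ n (r : R) (A : 'M[C]_n) : 0 <= r -> psdmx A ->
  psdmx ((r%:C)%C *: A).
Proof.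
move=> r_ge0 [hermA formA]; have rC_ge0 : 0 <= (r%:C)%C :> C by rewrite ler0c.
split; first by rewrite linearZ map_mxZ /= geC0_conj // hermA.
by move=> v; rewrite -scalemxAr -scalemxAl mxE mulr_ge0.
Qed.

Lemma psdmx_conj p q (W : 'M[C]_(p, q)) (A : 'M[C]_q) :
  psdmx A -> psdmx (W *m A *m W ^t*).
Proof.
case=> hermA formA; split.
  by rewrite !trmx_mul !map_mxM trmxCK hermA mulmxA.
by move=> v; have := formA (W ^t* *m v); rewrite trmx_mul map_mxM trmxCK !mulmxA.
Qed.

Lemma psdmx_mxsub p q (f : 'I_p -> 'I_q) (A : 'M[C]_q) :
  psdmx A -> psdmx (mxsub f f A).
Proof.
have -> : mxsub f f A = rowsub f 1%:M *m A *m (rowsub f 1%:M) ^t*.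
  rewrite trmx_mxsub trmx1 map_mxsub map_mx1 -rowsubE -[A in LHS]mulmx1.
  by rewrite mxsub_mul.
exact: psdmx_conj.
Qed.

End Forms.

Lemma log2_1 (R : realType) : log2 (1 : R) = 0.
Proof. by rewrite /log2 ln1 mul0r. Qed.

Lemma log2_ge0 (R : realType) (x : R) : 1 <= x -> 0 <= log2 x.
Proof. by move=> x_ge1; rewrite divr_ge0 ?ln_ge0 ?ler1n. Qed.

Lemma ler_log2 (R : realType) (x y : R) : 0 < x -> 0 < y -> (log2 x <= log2 y) = (x <= y).
Proof.
move=> x_gt0 y_gt0; rewrite /log2 ler_pM2r ?invr_gt0 ?ln_gt0 ?ltr1n //.
by rewrite ler_ln ?posrE.
Qed.

Lemma ltr_log2 (R : realType) (x y : R) : 0 < x -> 0 < y -> (log2 x < log2 y) = (x < y).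
Proof.
move=> x_gt0 y_gt0; rewrite /log2 ltr_pM2r ?invr_gt0 ?ln_gt0 ?ltr1n //.
by rewrite ltr_ln ?posrE.
Qed.

Lemma normC_le_eps_eq0 (R : realType) (z : R[i]) :
  (forall e : R, 0 < e -> `|z| <= (e%:C)%C) -> z = 0.
Proof.
move=> z_small; apply/eqP; rewrite -normr_le0.
apply/ler_addgt0Pr => w w_gt0; rewrite add0r.
have Rew_gt0 : 0 < complex.Re w by move: w_gt0; rewrite ltcE => /andP[].
by rewrite -(RRe_real (gtr0_real w_gt0)) z_small.
Qed.

Section MaxRelativeEntropy.
Variable R : realType.
Local Notation C := R[i].

Definition dmax_set n (rho sig : 'M[C]_n) :=
  [set mu : R | loewner_le rho ((mu%:C)%C *: sig)].

Lemma DmaxE n (rho sig : 'M[C]_n) : Dmax rho sig =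
  if `[< dmax_set rho sig !=set0 >] then (log2 (inf (dmax_set rho sig)))%:E else +oo%E.
Proof. by []. Qed.

Section UnitTrace.
Variables (n : nat) (rho sig : 'M[C]_n).
Hypotheses (tr_rho : \tr rho = 1) (tr_sig : \tr sig = 1).

Lemma dmax_set_ge1 mu : dmax_set rho sig mu -> 1 <= mu.
Proof.
move=> /psdmx_tr_ge0; rewrite linearB /= mxtraceZ tr_sig tr_rho mulr1.
have -> : ((mu%:C)%C - 1 : C) = ((mu - 1)%:C)%C by rewrite rmorphB rmorph1.
by rewrite ler0c subr_ge0.
Qed.

Lemma inf_dmax_set_ge1 : dmax_set rho sig !=set0 -> 1 <= inf (dmax_set rho sig).
Proof. by move=> S_neq0; apply: lb_le_inf => // mu /dmax_set_ge1. Qed.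

Lemma Dmax_ge0 : (0 <= Dmax rho sig)%E.
Proof.
rewrite DmaxE; case: asboolP => [S_neq0|_]; last exact: leey.
by rewrite lee_fin log2_ge0 // inf_dmax_set_ge1.
Qed.

Lemma Dmax_le_log2 mu : dmax_set rho sig mu -> (Dmax rho sig <= (log2 mu)%:E)%E.
Proof.
move=> S_mu; rewrite DmaxE; case: asboolP => [S_neq0|]; last by case; exists mu.
have inf_ge1 := inf_dmax_set_ge1 S_neq0.
have mu_ge1 := dmax_set_ge1 S_mu.
rewrite lee_fin ler_log2; last 2 first.
- exact: lt_le_trans ltr01 inf_ge1.
- exact: lt_le_trans ltr01 mu_ge1.
by apply: ge_inf => //; exists 1 => mu' /dmax_set_ge1.
Qed.

Lemma Dmax_lt_log2 t : 1 < t -> (Dmax rho sig < (log2 t)%:E)%E ->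
  exists2 mu, dmax_set rho sig mu & mu < t.
Proof.
move=> t_gt1; rewrite DmaxE; case: asboolP => [S_neq0|_]; last by rewrite ltNge leey.
have inf_gt0 := lt_le_trans ltr01 (inf_dmax_set_ge1 S_neq0).
rewrite lte_fin ltr_log2 ?(lt_trans ltr01 t_gt1) //.
by move=> /(inf_lt S_neq0) [mu S_mu mu_lt]; exists mu.
Qed.

End UnitTrace.

Lemma le_Dmax n m (rho sig : 'M[C]_n) (rho' sig' : 'M[C]_m) :
  \tr rho' = 1 -> \tr sig' = 1 -> dmax_set rho sig `<=` dmax_set rho' sig' ->
  (Dmax rho' sig' <= Dmax rho sig)%E.
Proof.
move=> tr_rho' tr_sig' sub_S; rewrite [X in (_ <= X)%E]DmaxE.
case: asboolP => [[mu S_mu]|_]; last exact: leey.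
have S'_neq0 : dmax_set rho' sig' !=set0 by exists mu; apply: sub_S.
have inf_ge1 := inf_dmax_set_ge1 tr_rho' tr_sig' S'_neq0.
have inf_le : inf (dmax_set rho' sig') <= inf (dmax_set rho sig).
  apply: lb_le_inf; first by exists mu.
  by move=> mu' /sub_S; apply: ge_inf; exists 1 => mu'' /(dmax_set_ge1 tr_rho' tr_sig').
rewrite DmaxE; case: asboolP => // _.
rewrite lee_fin ler_log2 //; last exact: lt_le_trans ltr01 (le_trans inf_ge1 inf_le).
exact: lt_le_trans ltr01 inf_ge1.
Qed.

Lemma qform_probe_near n (rho sig : 'M[C]_n) mu a b c :
  psdmx sig -> \tr rho = 1 -> \tr sig = 1 -> `|c| <= 1 -> dmax_set rho sig mu ->
  `|qform (rho - sig) (probe a b c)| <= ((8%:R * (mu - 1))%:C)%C.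
Proof.
move=> psd_sig tr_rho tr_sig c_le1 S_mu.
have mu_ge1 := dmax_set_ge1 tr_rho tr_sig S_mu.
rewrite /dmax_set /loewner_le /= in S_mu.
set A := _ - rho in S_mu.
have tr_A : \tr A = ((mu - 1)%:C)%C.
  by rewrite linearB /= mxtraceZ tr_sig tr_rho mulr1 rmorphB rmorph1.
have -> : rho - sig = ((mu - 1)%:C)%C *: sig - A.
  by rewrite /A rmorphB rmorph1 scalerBl scale1r opprB [RHS]addrC addrA subrK.
rewrite qformB qformZ; apply: le_trans (ler_normB _ _) _.
rewrite normrM !ger0_norm ?qform_ge0 ?ler0c ?subr_ge0 //.
have q_sig := qform_probe_le_tr a b psd_sig c_le1; rewrite tr_sig mulr1 in q_sig.
have q_A := qform_probe_le_tr a b S_mu c_le1; rewrite tr_A in q_A.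
apply: le_trans (lerD (ler_wpM2l _ q_sig) q_A) _; first by rewrite ler0c subr_ge0.
rewrite [_ * 4%:R]mulrC -mulrDl -natrD rmorphM rmorph_nat.
exact: lexx.
Qed.

End MaxRelativeEntropy.

Section Leakage.
Variables (R : realType) (X : finType).
Local Notation C := R[i].

Definition mixture n (pi : X -> R) (rho : X -> 'M[C]_n) : 'M[C]_n :=
  \sum_(x : X) ((pi x)%:C)%C *: rho x.

Lemma tr_mixture n (rho : X -> 'M[C]_n) pi :
  (forall x, \tr (rho x) = 1) -> pmf pi -> \tr (mixture pi rho) = 1.
Proof.
move=> tr_rho [_ sum_pi]; rewrite /mixture raddf_sum /=.
under eq_bigr do rewrite mxtraceZ tr_rho mulr1.
by rewrite -rmorph_sum sum_pi.
Qed.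

Lemma psdmx_mixture n (rho : X -> 'M[C]_n) pi :
  (forall x, psdmx (rho x)) -> pmf pi -> psdmx (mixture pi rho).
Proof.
move=> psd_rho [pi_ge0 _]; rewrite /mixture.
elim/big_ind: _ => [|A B|x _]; [exact: psdmx0 | exact: psdmxD | exact: psdmxZ].
Qed.

Lemma mixture_const n (rho : X -> 'M[C]_n) pi x0 :
  pmf pi -> (forall x, rho x = rho x0) -> mixture pi rho = rho x0.
Proof.
move=> [_ sum_pi] rho_const; rewrite /mixture.
under eq_bigr do rewrite rho_const.
by rewrite -scaler_suml -rmorph_sum sum_pi scale1r.
Qed.

Lemma leakage_ge0 n (rho : X -> 'M[C]_n) :
  (0 < #|X|)%N -> (forall x, \tr (rho x) = 1) -> (0 <= leakage rho)%E.
Proof.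
move=> /card_gt0P[x0 _] tr_rho; apply: le_ereal_inf_tmp => _ [pi pi_pmf <-].
apply: le_trans (le_bigmax _ _ x0).
exact: Dmax_ge0 (tr_rho x0) (tr_mixture tr_rho pi_pmf).
Qed.

Lemma leakage_le n m (rho : X -> 'M[C]_n) (rho' : X -> 'M[C]_m) :
  (forall pi x, pmf pi ->
     (Dmax (rho' x) (mixture pi rho') <= Dmax (rho x) (mixture pi rho))%E) ->
  (leakage rho' <= leakage rho)%E.
Proof.
move=> le_D; apply: le_ereal_inf_tmp => _ [pi pi_pmf <-].
apply: ge_ereal_inf; exists (\big[Order.max/-oo%E]_x Dmax (rho' x) (mixture pi rho'))%E.
  by exists pi.
by apply: le_bigmax2 => x _; apply: le_D.
Qed.

Lemma leakage_const n (rho : X -> 'M[C]_n) x0 :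
  (forall x, \tr (rho x) = 1) -> (forall x, rho x = rho x0) -> leakage rho = 0%E.
Proof.
move=> tr_rho rho_const; apply/le_anti.
rewrite leakage_ge0 ?andbT //; last by apply/card_gt0P; exists x0.
pose dirac x : R := (x == x0)%:R.
have dirac_pmf : pmf dirac.
  split=> [x|]; first exact: ler0n.
  by rewrite (bigD1 x0) //= /dirac eqxx big1 ?addr0 // => x /negbTE ->.
apply: ge_ereal_inf; exists (\big[Order.max/-oo%E]_x Dmax (rho x) (mixture dirac rho))%E.
  by exists dirac.
apply: bigmax_le => [|x _]; first exact: leNye.
have S1 : dmax_set (rho x) (mixture dirac rho) 1.
  rewrite /dmax_set /loewner_le /= rmorph1 scale1r (mixture_const dirac_pmf rho_const).
  by rewrite (rho_const x) subrr; apply: psdmx0.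
have := Dmax_le_log2 (tr_rho x) (tr_mixture tr_rho dirac_pmf) S1.
by rewrite log2_1.
Qed.

Lemma leakage_eq0_near n (rho : X -> 'M[C]_n) (d : R) :
  (forall x, \tr (rho x) = 1) -> leakage rho = 0%E -> 0 < d ->
  exists2 pi, pmf pi &
    forall x, exists2 mu, dmax_set (rho x) (mixture pi rho) mu & mu < 1 + d.
Proof.
move=> tr_rho leak0 d_gt0; have d1_gt1 : 1 < 1 + d by rewrite ltrDl.
have : (leakage rho < (log2 (1 + d))%:E)%E.
  by rewrite leak0 lte_fin -(log2_1 R) ltr_log2 ?ltr01 ?(lt_trans ltr01).
move=> /ereal_inf_lt[_ [pi pi_pmf <-] /bigmax_ltP[_ Dmax_lt]].
exists pi => // x.
apply: (Dmax_lt_log2 (tr_rho x) (tr_mixture tr_rho pi_pmf) d1_gt1).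
exact: Dmax_lt.
Qed.

Lemma leakage_eq0_const n (rho : X -> 'M[C]_n) :
  (forall x, density (rho x)) -> leakage rho = 0%E -> forall x x', rho x = rho x'.
Proof.
move=> dens leak0 x x'.
have tr_rho y : \tr (rho y) = 1 by case: (dens y).
apply/eqP; rewrite -subr_eq0; apply/eqP; apply: qform_probe_eq0 => a b c c_le1.
apply: normC_le_eps_eq0 => e e_gt0.
have e16_gt0 : 0 < e / 16%:R by rewrite divr_gt0.
have [pi pi_pmf near] := leakage_eq0_near tr_rho leak0 e16_gt0.
have psd_sig : psdmx (mixture pi rho) by apply: psdmx_mixture => // y; case: (dens y).
have tr_sig := tr_mixture tr_rho pi_pmf.
have [mu S_mu mu_lt] := near x; have [mu' S_mu' mu'_lt] := near x'.
have -> : rho x - rho x' = (rho x - mixture pi rho) - (rho x' - mixture pi rho).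
  by rewrite opprB addrA subrK.
rewrite qformB; apply: le_trans (ler_normB _ _) _.
apply: le_trans (lerD (qform_probe_near a b psd_sig (tr_rho x) tr_sig c_le1 S_mu)
                      (qform_probe_near a b psd_sig (tr_rho x') tr_sig c_le1 S_mu')) _.
by rewrite -rmorphD lecR; lra.
Qed.

End Leakage.

Section Unitary.
Variables (R : realType) (n : nat) (U : 'M[R[i]]_n).
Hypothesis U_unitary : U \is unitarymx.

Lemma loewner_le_conj_unitary (A B : 'M[R[i]]_n) :
  loewner_le (U *m A *m U ^t*) (U *m B *m U ^t*) <-> loewner_le A B.
Proof.
have UtU : U ^t* *m U = 1%:M by rewrite -[U ^t*]mul1mx mulmxKtV.
rewrite /loewner_le -mulmxBl -mulmxBr; split; last exact: psdmx_conj.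
move=> /(psdmx_conj (U ^t*)); rewrite trmxCK !mulmxA UtU mul1mx -mulmxA UtU.
by rewrite mulmx1.
Qed.

Lemma Dmax_conj_unitary (rho sig : 'M[R[i]]_n) :
  Dmax (U *m rho *m U ^t*) (U *m sig *m U ^t*) = Dmax rho sig.
Proof.
rewrite !DmaxE.
suff -> : dmax_set (U *m rho *m U ^t*) (U *m sig *m U ^t*) = dmax_set rho sig by [].
apply/funext => mu; apply/propext; rewrite /dmax_set /= scalemxAl scalemxAr.
exact: loewner_le_conj_unitary.
Qed.

Lemma mixture_conj (X : finType) (pi : X -> R) (rho : X -> 'M[R[i]]_n) :
  mixture pi (fun x => U *m rho x *m U ^t*) = U *m mixture pi rho *m U ^t*.
Proof.
rewrite /mixture mulmx_sumr mulmx_suml; apply: eq_bigr => x _.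
by rewrite scalemxAl scalemxAr.
Qed.

End Unitary.

Section Channel.
Variables (R : realType) (n m : nat) (E : {linear 'M[R[i]]_n -> 'M[R[i]]_m}).

(* Positivity is complete positivity at level [k = 1]; [C^1 (x) C^n] is [C^n]
   up to the reindexings [proj] and [emb]. *)
Lemma cp_psdmx A : completely_positive E -> psdmx A -> psdmx (E A).
Proof.
move=> cpE psdA.
pose proj (k : 'I_(1 * n)) := (mxtens_unindex k).2.
pose emb (a : 'I_m) := @mxtens_index 1 m (ord0, a).
have := cpE 1%N _ (psdmx_mxsub proj psdA).
rewrite /ampliation !big_ord1.
have -> : block (mxsub proj proj A) ord0 ord0 = A.
  by apply/matrixP => a b; rewrite !mxE /proj !mxtens_indexK.
move=> /(psdmx_mxsub emb).
have -> // : mxsub emb emb (tensmx (delta_mx ord0 ord0 : 'M[R[i]]_1) (E A)) = E A.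
by apply/matrixP => a b; rewrite mxE tensmxE mxE !eqxx mul1r.
Qed.

Lemma cp_loewner_le A B :
  completely_positive E -> loewner_le A B -> loewner_le (E A) (E B).
Proof. by move=> cpE; rewrite /loewner_le -linearB; apply: cp_psdmx. Qed.

Lemma Dmax_channel (rho sig : 'M[R[i]]_n) : quantum_channel E ->
  \tr rho = 1 -> \tr sig = 1 -> (Dmax (E rho) (E sig) <= Dmax rho sig)%E.
Proof.
move=> [cpE tpE] tr_rho tr_sig; apply: le_Dmax; rewrite ?tpE // => mu.
by rewrite /dmax_set /= => /(cp_loewner_le cpE); rewrite linearZ.
Qed.

Lemma mixture_linear (X : finType) (pi : X -> R) (rho : X -> 'M[R[i]]_n) :
  mixture pi (fun x => E (rho x)) = E (mixture pi rho).
Proof. by rewrite /mixture linear_sum; apply: eq_bigr => x _; rewrite linearZ. Qed.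

End Channel.

Theorem theorem1 (R : realType) (X : finType) (n : nat)
  (rho : X -> 'M[R[i]]_n) :
  (0 < #|X|)%N ->
  (forall x, density (rho x)) ->
  ((0 <= leakage rho)%E /\
     (leakage rho = 0%E <-> (forall x x' : X, rho x = rho x'))) /\
  (forall U : 'M[R[i]]_n, U \is unitarymx ->
     leakage (fun x => U *m rho x *m U ^t*) = leakage rho) /\
  (forall (m : nat) (E : {linear 'M[R[i]]_n -> 'M[R[i]]_m}),
     quantum_channel E ->
     (leakage (fun x => E (rho x)) <= leakage rho)%E).
Proof.
move=> X_gt0 dens; have tr_rho x : \tr (rho x) = 1 by case: (dens x).
have [x0 _] := card_gt0P X_gt0.
split; [split; [exact: leakage_ge0 | split] | split].
- exact: leakage_eq0_const.
- by move=> rho_eq; apply: (leakage_const tr_rho (rho_eq ^~ x0)).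
- move=> U U_unitary; apply/le_anti/andP.
  by split; apply: leakage_le => pi x _; rewrite mixture_conj ?Dmax_conj_unitary.
- move=> m E chE; apply: leakage_le => pi x pi_pmf.
  by rewrite mixture_linear; apply: Dmax_channel (tr_mixture tr_rho pi_pmf).
Qed.
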